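(* Let $n$ be a positive integer and let $A(n)=(a_{ij})$, $p=p(n)$, $pp=pp(n)$, $b(n)$ be as in the context. Let $m\ge 1$ be an integer such that $\overline{p}=pm$ satisfies $\lfloor \overline{p}/2\rfloor> b(n)$, put $r=\lfloor\overline{p}/2\rfloor$, let $v$ be an integer with $v\ge pp+\overline{p}$, and let $B=(b_{ij})_{1\le i,j\le\overline{p}}$ be the $\overline{p}\times\overline{p}$ matrix with $b_{ij}=a_{v+i,v+j}$ if $i-r\le j\le i+r$; $b_{ij}=a_{v+i,v+j-\overline{p}}$ if $j>i+r$; $b_{ij}=a_{v+i,v+j+\overline{p}}$ if $j<i-r$. Then every column of $B$ contains exactly $n+1$ ones.
   Context: $\mathbb{N}=\{1,2,3,\dots\}$. Fix a positive integer $n$. The infinite $\{0,1\}$-matrix $A(n)=(a_{ij})_{i,j\in\mathbb{N}}$ is defined recursively. Its entries are determined row by row (row $1$ first), and within each row from left to right, so that $a_{kl}$ is determined after all $a_{ij}$ with $i<k$ and all $a_{kj}$ with $j<l$. One sets $a_{kl}=1$ if and only if all of the following hold: (1) $\sum_{j<l}a_{kj}<n+1$; (2) $\sum_{i<k}a_{il}<n+1$; (3) there is no pair $(i,j)$ with $1\le i<k$, $1\le j<l$ and $a_{ij}=a_{il}=a_{kj}=1$. Otherwise $a_{kl}=0$. The matrix $A(n)$ is eventually periodic along the diagonal: there exist $c\ge0$, $q\ge1$ with $a_{i+q,j+q}=a_{ij}$ for all $i>c$, $j\ge1$. The period $p=p(n)$ is the smallest $q\ge1$ for which such a $c$ exists,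 and the preperiod $pp=pp(n)$ is the smallest $c\ge 0$ with $a_{i+p,j+p}=a_{ij}$ for all $i>c$, $j\ge 1$. Define $b(n)=\max\{|j-i| : i,j\ge1,\ a_{ij}=1,\ i>pp(n)\}$. *)

From mathcomp Require Import all_boot.
Set Implicit Arguments. Unset Strict Implicit. Unset Printing Implicit Defensive.

(* Internally rows/columns
   are stored 0-based in lists; the exported function [aA n i j] uses the
   paper's 1-based indices (i, j >= 1), and is [false] when i = 0 or j = 0. *)

(* Given the previously computed rows [prev] (rows 1..k-1, each a list of
   columns 1..L) and the current partial row [cur] (columns 1..l-1), decide
   a_{k l} (with l = size cur + 1). *)
Definition next_entry (n : nat) (prev : seq (seq bool)) (cur : seq bool) : bool :=
  let l0 := size cur in (* 0-based index of column l *)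
  [&& count id cur < n.+1,
      count (fun row => nth false row l0) prev < n.+1 &
      ~~ has (fun row => nth false row l0 &&
                 has (fun j => nth false row j && nth false cur j) (iota 0 l0)) prev].

Fixpoint build_row (n : nat) (prev : seq (seq bool)) (cur : seq bool) (fuel : nat)
  : seq bool :=
  match fuel with
  | 0 => cur
  | f.+1 => build_row n prev (rcons cur (next_entry n prev cur)) f
  end.

Fixpoint block (n K L : nat) : seq (seq bool) :=
  match K with
  | 0 => [::]
  | K'.+1 => let prev := block n K' L in rcons prev (build_row n prev [::] L)
  end.

Definition aA (n i j : nat) : bool :=
  if (i == 0) || (j == 0) then false
  else nth false (nth [::] (block n i j) i.-1) j.-1.

Definition periodic_from (n q c : nat) : Prop :=
  forall i j, c < i -> 1 <= j -> aA n (i + q) (j + q) = aA n i j.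

Definition is_period (n p : nat) : Prop :=
  [/\ 1 <= p, (exists c, periodic_from n p c) &
      forall q, 1 <= q -> (exists c, periodic_from n q c) -> p <= q].

Definition is_preperiod (n p pp : nat) : Prop :=
  periodic_from n p pp /\ forall c, periodic_from n p c -> pp <= c.

Definition distn (i j : nat) : nat := maxn (i - j) (j - i).

Definition is_bn (n pp b : nat) : Prop :=
  (exists i j, [/\ 1 <= i, 1 <= j, pp < i, aA n i j & distn i j = b]) /\
  (forall i j, 1 <= i -> 1 <= j -> pp < i -> aA n i j -> distn i j <= b).

Definition matB (n v pb i j : nat) : bool :=
  let r := pb./2 in
  if i + r < j then aA n (v + i) (v + j - pb)
  else if j + r < i then aA n (v + i) (v + j + pb)
  else aA n (v + i) (v + j).

From mathcomp Require Import all_boot zify.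
From Stdlib Require Import Classical_Prop.
Set Implicit Arguments. Unset Strict Implicit. Unset Printing Implicit Defensive.

(* Every row and every column of A(n) contains at most n+1 ones, so each of
   them is eventually zero.  Far enough down, a row therefore vanishes on all
   columns left of a given column c, and then only a full column c can block a
   one: every column ends up with exactly n+1 ones.  For c > pp + b these ones
   lie in rows t > pp with |t - c| <= b; rows t <= pp are excluded by moving
   column c by a multiple of the period beyond the (finite) support of those
   rows.  By diagonal periodicity with P = pm, column j of B lists the entries
   of column v+j of A in the rows v+1-P .. v+2P, and this window contains the
   whole band |t - (v+j)| <= b, hence all n+1 ones of that column. *)

(* 0-based form of the rule defining a_{kl}, for an arbitrary matrix g. *)
Definition greedy_rule (n : nat) (g : nat -> nat -> bool) (k l : nat) : bool :=
  [&& count (g k) (iota 0 l) < n.+1,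
      count (g^~ l) (iota 0 k) < n.+1 &
      ~~ has (fun i => g i l && has (fun j => g i j && g k j) (iota 0 l)) (iota 0 k)].

Definition a0 (n k l : nat) : bool := aA n k.+1 l.+1.

Lemma size_build_row n prev cur f : size (build_row n prev cur f) = size cur + f.
Proof.
elim: f cur => [|f IH] cur /=; first by rewrite addn0.
by rewrite IH size_rcons addSnnS.
Qed.

Lemma build_row_prefix n prev cur f : exists s, build_row n prev cur f = cur ++ s.
Proof.
elim: f cur => [|f IH] cur /=; first by exists [::]; rewrite cats0.
have [s ->] := IH (rcons cur (next_entry n prev cur)).
by exists (next_entry n prev cur :: s); rewrite cat_rcons.
Qed.

Lemma nth_build_row n prev f cur i : size cur <= i < size cur + f ->
  nth false (build_row n prev cur f) i
  = next_entry n prev (take i (build_row n prev cur f)).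
Proof.
elim: f cur => [|f IH] cur /= Hi; first lia.
case: (ltngtP i (size cur)) => Hc; first lia.
  by apply: IH; rewrite size_rcons; lia.
have [s ->] := build_row_prefix n prev (rcons cur (next_entry n prev cur)) f.
by rewrite -cats1 -catA Hc nth_cat ltnn subnn take_cat ltnn subnn take0 cats0.
Qed.

Lemma size_block n K L : size (block n K L) = K.
Proof. by elim: K => //= K IH; rewrite size_rcons IH. Qed.

Lemma nth_block n K L k :
  k < K -> nth [::] (block n K L) k = build_row n (block n k L) [::] L.
Proof.
elim: K => // K IH Hk /=; rewrite nth_rcons size_block.
by case: (ltngtP k K) => H; [apply: IH | lia | rewrite H].
Qed.

Lemma count_iota_nth (T : Type) (x0 : T) (a : pred T) s :
  count a s = count (fun i => a (nth x0 s i)) (iota 0 (size s)).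
Proof. by rewrite -{1}(mkseq_nth x0 s) /mkseq count_map. Qed.

Lemma has_iota_nth (T : Type) (x0 : T) (a : pred T) s :
  has a s = has (fun i => a (nth x0 s i)) (iota 0 (size s)).
Proof. by rewrite -{1}(mkseq_nth x0 s) /mkseq has_map. Qed.

Lemma next_entry_greedy_rule n prev cur g :
  (forall i j, i < size prev -> j <= size cur -> nth false (nth [::] prev i) j = g i j) ->
  (forall j, j < size cur -> nth false cur j = g (size prev) j) ->
  next_entry n prev cur = greedy_rule n g (size prev) (size cur).
Proof.
move=> Hprev Hcur; rewrite /next_entry /greedy_rule.
rewrite (count_iota_nth false) (count_iota_nth [::]) (has_iota_nth [::]).
congr [&& _ < _, _ < _ & ~~ _].
- by apply: eq_in_count => j; rewrite mem_iota => /andP[_ /Hcur].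
- by apply: eq_in_count => i; rewrite mem_iota => /andP[_ Hi]; apply: Hprev.
- apply: eq_in_has => i; rewrite mem_iota => /andP[_ Hi] /=; rewrite Hprev //.
  congr (_ && _); apply: eq_in_has => j; rewrite mem_iota => /andP[_ Hj].
  by rewrite Hprev ?Hcur //; lia.
Qed.

Lemma block_greedy_rule n s k l K L : k + l < s -> k < K -> l < L ->
  nth false (nth [::] (block n K L) k) l = greedy_rule n (a0 n) k l.
Proof.
elim: s k l K L => [|s IH] k l K L Hs HK HL //.
have IHa0 i j : i + j < s -> a0 n i j = greedy_rule n (a0 n) i j.
  by move=> Hij; apply: IH.
rewrite nth_block //; set row := build_row _ _ _ _.
have Hrow : size row = L by rewrite size_build_row.
rewrite nth_build_row /=; last lia.
have Htake : size (take l row) = l by rewrite size_take Hrow HL.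
rewrite -[l in RHS]Htake -[k in RHS](size_block n k L).
apply: next_entry_greedy_rule.
  move=> i j; rewrite size_block Htake => Hi Hj.
  by rewrite IH ?IHa0 //; lia.
move=> j; rewrite Htake size_block => Hj; rewrite nth_take //.
have -> : nth false row j = nth false (nth [::] (block n K L) k) j by rewrite nth_block.
by rewrite IH ?IHa0 //; lia.
Qed.

Lemma a0_greedy_rule n k l : a0 n k l = greedy_rule n (a0 n) k l.
Proof. exact: (@block_greedy_rule n (k + l).+1). Qed.

Lemma count_iotaS (f : pred nat) K : count f (iota 0 K.+1) = count f (iota 0 K) + f K.
Proof. by rewrite -addn1 iotaD count_cat /= addn0. Qed.

Lemma count_iota_addl (f : pred nat) d lo N :
  count f (iota (d + lo) N) = count (fun t => f (d + t)) (iota lo N).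
Proof. by rewrite iotaDl count_map. Qed.

Lemma count_col_a0_le n l K : count (a0 n ^~ l) (iota 0 K) <= n.+1.
Proof.
elim: K => // K IH; rewrite count_iotaS.
case H: (a0 n K l); last by rewrite addn0.
by move: H; rewrite a0_greedy_rule => /and3P[_ + _]; lia.
Qed.

Lemma count_row_a0_le n k L : count (a0 n k) (iota 0 L) <= n.+1.
Proof.
elim: L => // L IH; rewrite count_iotaS.
case H: (a0 n k L); last by rewrite addn0.
by move: H; rewrite a0_greedy_rule => /and3P[+ _ _]; lia.
Qed.

Lemma eventually_false_of_count_bounded N (f : pred nat) :
  (forall K, count f (iota 0 K) <= N) -> exists B, forall k, B <= k -> f k = false.
Proof.
elim: N f => [|N IH] f Hf.
  by exists 0 => k _; move: (Hf k.+1); rewrite count_iotaS; case: (f k) => //; lia.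
case: (classic (exists k, f k)) => [[k0 Hk0]|Hnone]; last first.
  by exists 0 => k _; apply/negbTE/negP => Hk; apply: Hnone; exists k.
have Htail K : count (fun k => f (k0.+1 + k)) (iota 0 K) <= N.
  move: (Hf (k0.+1 + K)).
  rewrite iotaD count_cat add0n -{2}[k0.+1]addn0 count_iota_addl count_iotaS Hk0.
  lia.
have [B HB] := IH _ Htail.
exists (k0.+1 + B) => k Hk; rewrite -(subnKC (_ : k0.+1 <= k)); last lia.
by apply: HB; lia.
Qed.

Lemma eventually_false_uniform (F : nat -> nat -> bool) l :
  (forall x, exists B, forall k, B <= k -> F x k = false) ->
  exists B, forall x k, x < l -> B <= k -> F x k = false.
Proof.
elim: l => [|l IH] H; first by exists 0.
have [B1 H1] := IH H; have [B2 H2] := H l.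
exists (maxn B1 B2) => x k Hx Hk.
by case: (ltngtP x l) => Hxl; [apply: H1 | lia | rewrite Hxl; apply: H2]; lia.
Qed.

(* Below row R all entries left of column l vanish, so the rule only asks for
   column l not to be full yet. *)
Lemma count_col_a0_full n l : exists K, count (a0 n ^~ l) (iota 0 K) = n.+1.
Proof.
have [R HR] := @eventually_false_uniform (fun j k => a0 n k j) l
  (fun j => eventually_false_of_count_bounded (count_col_a0_le n j)).
have Hgrow t : t <= n.+1 -> t <= count (a0 n ^~ l) (iota 0 (R + t)).
  elim: t => // t IHt Ht; rewrite addnS count_iotaS.
  have Hle := IHt (ltnW Ht).
  case: (ltnP t (count (a0 n ^~ l) (iota 0 (R + t)))) => Hc; first lia.
  suff -> : a0 n (R + t) l by lia.
  rewrite a0_greedy_rule; apply/and3P; split; last 2 first.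
  - lia.
  - apply/hasPn => i _; apply/negP => /andP[_ /hasP[j]].
    by rewrite mem_iota => /andP[_ Hj]; rewrite (HR j (R + t)) ?andbF //; lia.
  rewrite (eq_in_count (a2 := pred0)) ?count_pred0 // => j.
  by rewrite mem_iota => /andP[_ Hj]; apply: HR; lia.
by exists (R + n.+1); apply/eqP; rewrite eqn_leq count_col_a0_le Hgrow.
Qed.

Lemma aA_row0 n c : aA n 0 c = false. Proof. by []. Qed.
Lemma aA_col0 n t : aA n t 0 = false. Proof. by rewrite /aA orbT. Qed.

Lemma count_col_aA n c K :
  count (aA n ^~ c.+1) (iota 0 K.+1) = count (a0 n ^~ c) (iota 0 K).
Proof. by rewrite /= -[1]/(1 + 0) count_iota_addl. Qed.

Lemma count_col_aA_le n c K : count (aA n ^~ c) (iota 0 K) <= n.+1.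
Proof.
case: c => [|c].
  by rewrite (eq_in_count (a2 := pred0)) ?count_pred0 // => t _; exact: aA_col0.
by case: K => // K; rewrite count_col_aA; exact: count_col_a0_le.
Qed.

Lemma count_col_aA_full n c : 1 <= c ->
  exists K0, forall K, K0 <= K -> count (aA n ^~ c) (iota 0 K) = n.+1.
Proof.
case: c => // c _; have [K HK] := count_col_a0_full n c.
exists K.+1 => K' HK'; apply/eqP; rewrite eqn_leq count_col_aA_le.
by rewrite -(subnKC HK') iotaD count_cat count_col_aA HK leq_addr.
Qed.

Lemma aA_rows_eventually_false n R :
  exists B, forall t c, t <= R -> B <= c -> aA n t c = false.
Proof.
have Hrow t : exists B, forall c, B <= c -> aA n t c = false.
  case: t => [|t]; first by exists 0 => c _; exact: aA_row0.
  have [B HB] := eventually_false_of_count_bounded (count_row_a0_le n t).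
  by exists B.+1 => -[|c] Hc //; apply: HB.
have [B HB] := @eventually_false_uniform (aA n) R.+1 Hrow.
by exists B => t c Ht Hc; apply: HB.
Qed.

Lemma periodic_from_mul n p pp k : periodic_from n p pp -> periodic_from n (p * k) pp.
Proof.
move=> Hp; elim: k => [|k IH] i j Hi Hj; first by rewrite muln0 !addn0.
by rewrite mulnS (addnC p) !addnA Hp ?IH //; lia.
Qed.

Section Band.

Variables n p pp b : nat.
Hypothesis p_gt0 : 0 < p.
Hypothesis periodic : periodic_from n p pp.
Hypothesis band : forall i j, 1 <= i -> 1 <= j -> pp < i -> aA n i j -> distn i j <= b.

(* Column c + p B has all its n+1 ones below row pp + p B (rows <= pp vanish
   beyond column B, the others by the band); shifting back by p B places n+1
   ones of column c below row pp, leaving none above. *)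
Lemma aA_top_rows_false c t : pp + b < c -> t <= pp -> aA n t c = false.
Proof.
move=> Hc Ht.
have [B HB] := aA_rows_eventually_false n pp.
pose Q := p * B.
have HQ : B <= Q by rewrite /Q leq_pmull.
have [K0 HK0] := @count_col_aA_full n (c + Q) (ltac:(lia)).
have := HK0 (pp.+1 + Q + K0) (ltac:(lia)).
rewrite iotaD count_cat.
have -> : count (aA n ^~ (c + Q)) (iota 0 (pp.+1 + Q)) = 0.
  apply/eqP; rewrite eqn0Ngt -has_count; apply/hasPn => s.
  rewrite mem_iota => /andP[_ Hs].
  case: (leqP s pp) => Hspp; first by rewrite HB //; lia.
  have [Hs1 HcQ1] : 0 < s /\ 0 < c + Q by lia.
  by apply/negP => /(band Hs1 HcQ1 Hspp); rewrite /distn; lia.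
rewrite add0n add0n [pp.+1 + Q]addnC count_iota_addl => Hbelow.
have Hc_below : count (aA n ^~ c) (iota pp.+1 K0) = n.+1.
  rewrite -Hbelow; apply: eq_in_count => s; rewrite mem_iota => /andP[Hs _] /=.
  by rewrite (addnC Q) (periodic_from_mul B periodic) //; lia.
have := count_col_aA_le n c (pp.+1 + K0).
rewrite iotaD count_cat add0n Hc_below -{2}[n.+1]add0n leq_add2r leqn0 eqn0Ngt.
rewrite -has_count => /hasPn /(_ t); rewrite mem_iota => /(_ ltac:(lia)).
exact: negbTE.
Qed.

Lemma aA_far_false c t : pp + b < c -> b < distn t c -> aA n t c = false.
Proof.
move=> Hc Hd; apply/negbTE/negP => Ht.
case: (leqP t pp) => Htpp; first by rewrite aA_top_rows_false in Ht.
have [Ht1 Hc1] : 0 < t /\ 0 < c by lia.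
by have := band Ht1 Hc1 Htpp Ht; lia.
Qed.

Lemma count_col_window c lo N : pp + b < c -> lo + b <= c -> c + b < lo + N ->
  count (aA n ^~ c) (iota lo N) = n.+1.
Proof.
move=> Hc Hlo Hhi.
have Hzero s : (forall t, t \in s -> b < distn t c) -> count (aA n ^~ c) s = 0.
  move=> Hs; rewrite (eq_in_count (a2 := pred0)) ?count_pred0 // => t /Hs.
  exact: aA_far_false.
have [K0 HK0] := @count_col_aA_full n c (ltac:(lia)).
rewrite -(HK0 (lo + N + K0)) ?leq_addl // -addnA !iotaD !count_cat add0n.
rewrite [count _ (iota 0 lo)]Hzero; last by move=> t; rewrite mem_iota /distn; lia.
rewrite [count _ (iota (lo + N) K0)]Hzero ?addn0 //.
by move=> t; rewrite mem_iota /distn; lia.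
Qed.

End Band.

Lemma count_sum3 (f g h k : pred nat) s :
  (forall x, x \in s -> (f x : nat) = g x + h x + k x) ->
  count f s = count g s + count h s + count k s.
Proof.
elim: s => //= x s IH H.
rewrite H ?mem_head // IH; first lia.
by move=> y Hy; apply: H; rewrite in_cons Hy orbT.
Qed.

Section MatB.

Variables n pp b P v j : nat.
Hypothesis periodic : periodic_from n P pp.
Hypothesis b_lt_half : b < P./2.
Hypothesis v_ge : pp + P <= v.
Hypothesis j_range : 1 <= j <= P.
Hypothesis far_false : forall t, b < distn t (v + j) -> aA n t (v + j) = false.

(* Of the rows v+i-P, v+i, v+i+P of column v+j, only the one within the band
   can carry a one, and by periodicity that entry is b_{ij}. *)
Lemma matB_as_sum i : 1 <= i <= P ->
  (matB n v P i j : nat)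
  = aA n (v + i - P) (v + j) + aA n (v + i) (v + j) + aA n (v + i + P) (v + j).
Proof.
move=> Hi; rewrite /matB.
case: ifP => [Hup|/negbT Hup].
  have [Hd1 Hd2] : b < distn (v + i - P) (v + j) /\ b < distn (v + i) (v + j).
    by rewrite /distn; lia.
  rewrite (far_false Hd1) (far_false Hd2) -periodic ?subnK //; lia.
case: ifP => [Hlow|/negbT Hlow].
  have [Hd1 Hd2] : b < distn (v + i) (v + j) /\ b < distn (v + i + P) (v + j).
    by rewrite /distn; lia.
  rewrite (far_false Hd1) (far_false Hd2) -[aA n (v + i - P) _]periodic ?subnK ?addn0 //; lia.
have [Hd1 Hd2] : b < distn (v + i - P) (v + j) /\ b < distn (v + i + P) (v + j).
  by rewrite /distn; lia.
by rewrite (far_false Hd1) (far_false Hd2) addn0.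
Qed.

Lemma count_matB_col :
  count (fun i => matB n v P i j) (iota 1 P)
  = count (aA n ^~ (v + j)) (iota (v - P).+1 (3 * P)).
Proof.
have Hshift d : count (aA n ^~ (v + j)) (iota (d + 1) P)
    = count (fun i => aA n (d + i) (v + j)) (iota 1 P) by rewrite count_iota_addl.
rewrite (count_sum3 (g := fun i => aA n ((v - P) + i) (v + j))
                    (h := fun i => aA n (v + i) (v + j))
                    (k := fun i => aA n ((v + P) + i) (v + j))); last first.
  move=> i; rewrite mem_iota => Hi; rewrite matB_as_sum; last lia.
  by congr (aA n _ _ + _ + aA n _ _); lia.
rewrite (_ : 3 * P = P + P + P) ?iotaD ?count_cat -?[(v - P).+1]addn1; last lia.
have -> : v - P + 1 + P = v + 1 by lia.
have -> : v - P + 1 + (P + P) = v + P + 1 by lia.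
by rewrite (Hshift (v - P)) (Hshift v) (Hshift (v + P)).
Qed.

End MatB.

Theorem theorem4p3 (n p pp b m v : nat) :
  0 < n ->
  is_period n p ->
  is_preperiod n p pp ->
  is_bn n pp b ->
  1 <= m ->
  b < (p * m)./2 ->
  pp + p * m <= v ->
  forall j, 1 <= j <= p * m ->
    count (fun i => matB n v (p * m) i j) (iota 1 (p * m)) = n.+1.
Proof.
move=> _ [p_gt0 _ _] [periodic _] [_ band] _ b_lt_half v_ge j j_range.
have col_far : pp + b < v + j by lia.
have far_false t : b < distn t (v + j) -> aA n t (v + j) = false.
  exact: (aA_far_false p_gt0 periodic band col_far).
rewrite (count_matB_col (periodic_from_mul m periodic) b_lt_half v_ge j_range far_false).
by apply: (count_col_window p_gt0 periodic band col_far); lia.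
Qed.
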